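(* Let $(X,\cdot)$ be a Rump right quasigroup, and for $x,y\in X$ write $x/y$ for the unique element $w$ with $wy = x$. Then for all $x,y \in X$: (1) $(xx)\bigl(y/(xx)\bigr) = \Bigl(x\bigl((y/(xx))/x\bigr)\Bigr)\Bigl(x\bigl((y/(xx))/x\bigr)\Bigr)$; (2) $(xx)/\bigl(y(x/y)\bigr) = (x/y)(x/y)$.
   Context: A magma $(X,\cdot)$ is a right quasigroup if every right translation $r_x: y \mapsto yx$ is a bijection of $X$; then $x/y := r_y^{-1}(x)$. A Rump right quasigroup is a right quasigroup satisfying $(zx)(yx) = (zy)(xy)$ for all $x,y,z\in X$. *)

From mathcomp Require Import ssreflect ssrfun ssrbool.

Definition right_quasigroup {X : Type} (mul : X -> X -> X) : Prop :=
  forall x : X, bijective (fun y => mul y x).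

Definition rump {X : Type} (mul : X -> X -> X) : Prop :=
  forall x y z : X, mul (mul z x) (mul y x) = mul (mul z y) (mul x y).

Definition is_right_division {X : Type} (mul rdiv : X -> X -> X) : Prop :=
  forall x y : X, mul (rdiv x y) y = x.

From mathcomp Require Import ssreflect ssrfun ssrbool.

(* Both identities are the Rump identity with z = x, namely
   (xx)(yx) = (xy)(xy), read after writing y/(xx) as ((y/(xx))/x)x in (1)
   and x as (x/y)y in (2). *)

Section RumpRightQuasigroup.

Context {X : Type} {mul rdiv : X -> X -> X}.
Hypotheses (hq : right_quasigroup mul) (hr : rump mul)
  (hdiv : is_right_division mul rdiv).

Lemma rump_sqr x y : mul (mul x x) (mul y x) = mul (mul x y) (mul x y).
Proof. exact: hr. Qed.

Lemma mulrdivK x y : rdiv (mul x y) y = x.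
Proof. by apply: (bij_inj (hq y)); rewrite /= hdiv. Qed.

Lemma mul_sqr_rdiv x u :
  mul (mul x x) u = mul (mul x (rdiv u x)) (mul x (rdiv u x)).
Proof. by rewrite -rump_sqr hdiv. Qed.

Lemma rdiv_sqr x y :
  rdiv (mul x x) (mul y (rdiv x y)) = mul (rdiv x y) (rdiv x y).
Proof.
have {1 2}-> : x = mul (rdiv x y) y by rewrite hdiv.
by rewrite -rump_sqr mulrdivK.
Qed.

End RumpRightQuasigroup.

Theorem mainTheorem2 (X : Type) (mul rdiv : X -> X -> X)
  (hq : right_quasigroup mul) (hr : rump mul)
  (hdiv : is_right_division mul rdiv) :
  forall x y : X,
    mul (mul x x) (rdiv y (mul x x)) =
      mul (mul x (rdiv (rdiv y (mul x x)) x)) (mul x (rdiv (rdiv y (mul x x)) x))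
    /\
    rdiv (mul x x) (mul y (rdiv x y)) = mul (rdiv x y) (rdiv x y).
Proof.
move=> x y; split; first exact: (mul_sqr_rdiv hr hdiv).
exact: (rdiv_sqr hq hr hdiv).
Qed.
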